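(* Let $M$ be a timelike surface in $\mathbb{R}^{n,1}$ with a canonical null direction with respect to a constant unit spacelike vector $Z$, and let $W$ be as below. Then $$\nabla^\perp_W\vec H=-\nabla^\perp_{Z^\top}\big(II(W,W)\big),\qquad |\vec H|^2=-\langle\nabla^\perp_W\vec H,Z^\perp\rangle,$$ and the Gaussian curvature satisfies $$K=|\vec H|^2-\langle II(W,W),II(Z^\top,Z^\top)\rangle.$$
   Context: $\mathbb{R}^{n,1}$ is $\mathbb{R}^{n+1}$ with the metric $-dx_1^2+dx_2^2+\dots+dx_{n+1}^2$. A surface is timelike if the induced metric has signature $(1,1)$; a vector $v$ is lightlike if $v\ne0$ and $\langle v,v\rangle=0$. For a constant vector $Z$, $Z=Z^\top+Z^\perp$ along $M$; $M$ has a canonical null direction with respect to $Z$ if $Z^\top$ is lightlike everywhere on $M$. $W$ is the unique lightlike tangent field with $\langle Z^\top,W\rangle=-1$. $II$ is the second fundamental form, $\nabla^\perp$ the normal connection, $\vec H=\frac12\operatorname{tr}_{\langle,\rangle}II$ the mean curvature vector (which equals $-II(Z^\top,W)$), $|\vec H|^2:=\langle\vec H,\vec H\rangle$, and $K$ the Gaussian curvature of $M$. *)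

From Stdlib Require Import Reals Lra List ClassicalEpsilon.
Open Scope R_scope.

(* A vector of R^{n+1} is a function nat -> R; only the components 0..n are
   meaningful.  Component 0 is the time coordinate. *)
Definition vec := nat -> R.

Definition vadd (x y : vec) : vec := fun k => x k + y k.
Definition vsub (x y : vec) : vec := fun k => x k - y k.
Definition vscale (a : R) (x : vec) : vec := fun k => a * x k.
Definition vopp (x : vec) : vec := fun k => - x k.

Definition mink (n : nat) (x y : vec) : R :=
  sum_f_R0 (fun k => (if Nat.eqb k 0 then -1 else 1) * x k * y k) n.

Definition veq (n : nat) (x y : vec) : Prop := forall k, (k <= n)%nat -> x k = y k.
Definition vnonzero (n : nat) (x : vec) : Prop := exists k, (k <= n)%nat /\ x k <> 0.

(* partial derivative in the i-th coordinate (i = 0 : u, otherwise v),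
   defined as *the* derivative (chosen by epsilon; it is unique when it exists). *)
Definition pd (i : nat) (f : R -> R -> R) (u v : R) : R :=
  match i with
  | O => epsilon (inhabits 0) (fun l => derivable_pt_lim (fun s => f s v) u l)
  | _ => epsilon (inhabits 0) (fun l => derivable_pt_lim (fun s => f u s) v l)
  end.

Definition has_pd (i : nat) (f : R -> R -> R) (u v : R) : Prop :=
  match i with
  | O => exists l, derivable_pt_lim (fun s => f s v) u l
  | _ => exists l, derivable_pt_lim (fun s => f u s) v l
  end.

Definition pdv (i : nat) (F : R -> R -> vec) (u v : R) : vec :=
  fun k => pd i (fun a b => F a b k) u v.

Definition open2 (U : R -> R -> Prop) : Prop :=
  forall u v, U u v -> exists r, r > 0 /\
    forall u' v', Rabs (u' - u) < r -> Rabs (v' - v) < r -> U u' v'.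

Definition continuous_on2 (U : R -> R -> Prop) (f : R -> R -> R) : Prop :=
  forall u v, U u v -> forall eps, eps > 0 -> exists d, d > 0 /\
    forall u' v', U u' v' -> Rabs (u' - u) < d -> Rabs (v' - v) < d ->
      Rabs (f u' v' - f u v) < eps.

Fixpoint iter_pd (w : list nat) (f : R -> R -> R) : R -> R -> R :=
  match w with
  | nil => f
  | i :: w' => pd i (iter_pd w' f)
  end.

Definition smooth_on (U : R -> R -> Prop) (f : R -> R -> R) : Prop :=
  forall w : list nat,
    (forall i u v, U u v -> has_pd i (iter_pd w f) u v) /\
    continuous_on2 U (iter_pd w f).

Definition sum2 (f : nat -> R) : R := f 0%nat + f 1%nat.
Definition vsum2 (f : nat -> vec) : vec := fun k => f 0%nat k + f 1%nat k.

Section Surface.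
Variable n : nat.
Variable X : R -> R -> vec.

Definition Xd (i : nat) : R -> R -> vec := pdv i X.

Definition gmet (i j : nat) (u v : R) : R := mink n (Xd i u v) (Xd j u v).
Definition gdet (u v : R) : R := gmet 0 0 u v * gmet 1 1 u v - gmet 0 1 u v * gmet 1 0 u v.
Definition ginv (i j : nat) (u v : R) : R :=
  match i, j with
  | O, O => gmet 1 1 u v / gdet u v
  | O, _ => - gmet 0 1 u v / gdet u v
  | _, O => - gmet 1 0 u v / gdet u v
  | _, _ => gmet 0 0 u v / gdet u v
  end.

Definition tvec (a : nat -> R) (u v : R) : vec := vsum2 (fun i => vscale (a i) (Xd i u v)).

Definition tcoef (Y : vec) (u v : R) (i : nat) : R :=
  sum2 (fun j => ginv i j u v * mink n Y (Xd j u v)).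
Definition tanp (Y : vec) (u v : R) : vec := tvec (tcoef Y u v) u v.
Definition norp (Y : vec) (u v : R) : vec := vsub Y (tanp Y u v).

Definition IIc (i j : nat) (u v : R) : vec := norp (pdv i (Xd j) u v) u v.
Definition II (a b : nat -> R) (u v : R) : vec :=
  vsum2 (fun i => vsum2 (fun j => vscale (a i * b j) (IIc i j u v))).

Definition Hvec (u v : R) : vec :=
  vscale (1/2) (vsum2 (fun i => vsum2 (fun j => vscale (ginv i j u v) (IIc i j u v)))).

Definition Dv (a : nat -> R) (xi : R -> R -> vec) (u v : R) : vec :=
  vsum2 (fun i => vscale (a i) (pdv i xi u v)).
Definition nablaperp (a : nat -> R) (xi : R -> R -> vec) (u v : R) : vec :=
  norp (Dv a xi u v) u v.

Definition Gam (k i j : nat) (u v : R) : R :=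
  (1/2) * sum2 (fun l => ginv k l u v *
     (pd i (gmet j l) u v + pd j (gmet i l) u v - pd l (gmet i j) u v)).

(* coefficients c^m of R(d_0,d_1)d_1 = nabla_0 nabla_1 d_1 - nabla_1 nabla_0 d_1 *)
Definition Rcoef (m : nat) (u v : R) : R :=
  pd 0 (Gam m 1 1) u v - pd 1 (Gam m 0 1) u v
  + sum2 (fun k => Gam k 1 1 u v * Gam m 0 k u v - Gam k 0 1 u v * Gam m 1 k u v).

(* Gaussian curvature K = <R(d_0,d_1)d_1, d_0> / (g_00 g_11 - g_01^2) *)
Definition Kgauss (u v : R) : R :=
  sum2 (fun m => Rcoef m u v * gmet m 0 u v) / gdet u v.

End Surface.

Definition ZTc (n : nat) (X : R -> R -> vec) (Z : vec) (u v : R) : nat -> R :=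
  tcoef n X Z u v.

From Stdlib Require Import Reals Lra Lia Psatz List ClassicalEpsilon FunctionalExtensionality.
From Coquelicot Require Coquelicot.
Open Scope R_scope.

(* Write T := Z^T and let W be as in the statement.  In the null frame (T, W) the inverse
   metric is g^{ij} = -(T^i W^j + W^i T^j), so H = -II(T, W), and the Gauss equation
   K = (<II_00, II_11> - <II_01, II_01>) / det g becomes K = |H|^2 - <II(W,W), II(T,T)>.
   Differentiating <Z, X_j> = g(X_j, T) and the frame relations expresses the derivatives
   of T and W through the metric and <Z, X_ij>; in particular the symmetric form
   <Z^perp, X_ij> annihilates T, hence is a multiple of (T^perp)^2, which forces
   <H, Z^perp> = 0.  Differentiating this along W, with (D Z^perp)^perp = -II(., T)
   (Weingarten), gives |H|^2 = -<nabla^perp_W H, Z^perp>.  The first identity is a direct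
   coordinate computation with the same derivative formulas. *)

(** * Partial derivatives on R^2 *)

Definition coord_line (i : nat) (f : R -> R -> R) (u v : R) : R -> R :=
  match i with O => fun s => f s v | _ => fun s => f u s end.
Definition coord_pt (i : nat) (u v : R) : R := match i with O => u | _ => v end.

Definition is_pd (i : nat) (f : R -> R -> R) (u v l : R) : Prop :=
  derivable_pt_lim (coord_line i f u v) (coord_pt i u v) l.

Lemma has_pdE i f u v : has_pd i f u v <-> exists l, is_pd i f u v l.
Proof. destruct i; reflexivity. Qed.

Lemma pd_eq i f u v l : is_pd i f u v l -> pd i f u v = l.
Proof.
  intro H. destruct i; unfold pd, is_pd in *; simpl in *;
  (eapply uniqueness_limite; [apply epsilon_spec; eexists; exact H | exact H]).
Qed.

Lemma is_pd_pd i f u v : has_pd i f u v -> is_pd i f u v (pd i f u v).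
Proof. intros [l H]%has_pdE. rewrite (pd_eq _ _ _ _ _ H). exact H. Qed.

Lemma is_pd_has i f u v l : is_pd i f u v l -> has_pd i f u v.
Proof. intro H. apply has_pdE. eauto. Qed.

Lemma is_pd_unique i f u v l1 l2 : is_pd i f u v l1 -> is_pd i f u v l2 -> l1 = l2.
Proof. intros H1 H2. rewrite <- (pd_eq _ _ _ _ _ H1). exact (pd_eq _ _ _ _ _ H2). Qed.

Lemma is_pd_const i c u v : is_pd i (fun _ _ => c) u v 0.
Proof. destruct i; apply derivable_pt_lim_const. Qed.

Lemma is_pd_plus i f g u v l1 l2 : is_pd i f u v l1 -> is_pd i g u v l2 ->
  is_pd i (fun a b => f a b + g a b) u v (l1 + l2).
Proof. destruct i; apply derivable_pt_lim_plus. Qed.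

Lemma is_pd_minus i f g u v l1 l2 : is_pd i f u v l1 -> is_pd i g u v l2 ->
  is_pd i (fun a b => f a b - g a b) u v (l1 - l2).
Proof. destruct i; apply derivable_pt_lim_minus. Qed.

Lemma is_pd_opp i f u v l : is_pd i f u v l -> is_pd i (fun a b => - f a b) u v (- l).
Proof. destruct i; apply derivable_pt_lim_opp. Qed.

Lemma is_pd_mult i f g u v l1 l2 : is_pd i f u v l1 -> is_pd i g u v l2 ->
  is_pd i (fun a b => f a b * g a b) u v (l1 * g u v + f u v * l2).
Proof. destruct i; apply derivable_pt_lim_mult. Qed.

Lemma is_pd_div i f g u v l1 l2 : is_pd i f u v l1 -> is_pd i g u v l2 -> g u v <> 0 ->
  is_pd i (fun a b => f a b / g a b) u v ((l1 * g u v - l2 * f u v) / (g u v)²).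
Proof.
  intros H1 H2 H3. destruct i; exact (derivable_pt_lim_div _ _ _ _ _ H1 H2 H3).
Qed.

Lemma is_pd_ext i f g u v l1 l2 : (forall a b, f a b = g a b) -> l1 = l2 ->
  is_pd i f u v l1 -> is_pd i g u v l2.
Proof.
  intros H <-. replace g with f; auto.
  do 2 (apply functional_extensionality; intro). auto.
Qed.

Lemma is_pd_local (U : R -> R -> Prop) i f g u v l : open2 U -> U u v ->
  (forall a b, U a b -> f a b = g a b) -> is_pd i f u v l -> is_pd i g u v l.
Proof.
  intros HU Huv Hfg H. destruct (HU u v Huv) as [r [Hr Hb]].
  destruct i; unfold is_pd, coord_line, coord_pt in *; intros eps Heps;
  destruct (H eps Heps) as [d Hd];
  (assert (Hm : 0 < Rmin d r) by (apply Rmin_pos; [apply cond_pos | lra]));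
  exists (mkposreal _ Hm); intros h Hh0 Hh; simpl in Hh;
  (assert (Hh1 : Rabs h < d) by (eapply Rlt_le_trans; [exact Hh | apply Rmin_l]));
  (assert (Hh2 : Rabs h < r) by (eapply Rlt_le_trans; [exact Hh | apply Rmin_r]));
  specialize (Hd h Hh0 Hh1); rewrite <- !Hfg; auto; apply Hb;
  rewrite ?Rminus_diag, ?Rabs_R0; auto; now replace (_ + h - _) with h by ring.
Qed.

Lemma is_pd_local_unique (U : R -> R -> Prop) i f g u v l1 l2 : open2 U -> U u v ->
  (forall a b, U a b -> f a b = g a b) -> is_pd i f u v l1 -> is_pd i g u v l2 -> l1 = l2.
Proof. intros HU H E H1 H2. eapply is_pd_unique; [|exact H2]. eapply is_pd_local; eauto. Qed.

Lemma is_pd_sum i (F : nat -> R -> R -> R) L u v m :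
  (forall k, (k <= m)%nat -> is_pd i (F k) u v (L k)) ->
  is_pd i (fun a b => sum_f_R0 (fun k => F k a b) m) u v (sum_f_R0 L m).
Proof.
  induction m; intro H; simpl.
  - apply H; lia.
  - apply is_pd_plus; [apply IHm; intros; apply H; lia | apply H; lia].
Qed.

Lemma is_pd_sum2 i (F : nat -> R -> R -> R) u v L0 L1 :
  is_pd i (F 0%nat) u v L0 -> is_pd i (F 1%nat) u v L1 ->
  is_pd i (fun a b => sum2 (fun j => F j a b)) u v (L0 + L1).
Proof. apply is_pd_plus. Qed.

Lemma pd_local U i f g u v : open2 U -> U u v -> (forall a b, U a b -> f a b = g a b) ->
  has_pd i f u v -> pd i f u v = pd i g u v.
Proof.
  intros HU Huv H Hf. symmetry. apply pd_eq. eapply is_pd_local; eauto. apply is_pd_pd; auto.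
Qed.

Definition is_pdv (i : nat) (F : R -> R -> vec) (u v : R) (L : vec) : Prop :=
  forall c, is_pd i (fun a b => F a b c) u v (L c).

Lemma pdv_eq i F u v L : is_pdv i F u v L -> pdv i F u v = L.
Proof. intro H. apply functional_extensionality; intro c. apply pd_eq, H. Qed.

Lemma is_pdv_pdv i F u v : (forall c, has_pd i (fun a b => F a b c) u v) ->
  is_pdv i F u v (pdv i F u v).
Proof. intros H c. apply is_pd_pd, H. Qed.

Lemma is_pdv_vadd i F G u v L M : is_pdv i F u v L -> is_pdv i G u v M ->
  is_pdv i (fun a b => vadd (F a b) (G a b)) u v (vadd L M).
Proof. intros H1 H2 c; apply is_pd_plus; auto. Qed.

Lemma is_pdv_vsub i F G u v L M : is_pdv i F u v L -> is_pdv i G u v M ->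
  is_pdv i (fun a b => vsub (F a b) (G a b)) u v (vsub L M).
Proof. intros H1 H2 c; apply is_pd_minus; auto. Qed.

Lemma is_pdv_vopp i F u v L : is_pdv i F u v L ->
  is_pdv i (fun a b => vopp (F a b)) u v (vopp L).
Proof. intros H c; apply is_pd_opp; auto. Qed.

Lemma is_pdv_vscale i f F u v l L : is_pd i f u v l -> is_pdv i F u v L ->
  is_pdv i (fun a b => vscale (f a b) (F a b)) u v (vadd (vscale l (F u v)) (vscale (f u v) L)).
Proof. intros H1 H2 c; apply is_pd_mult; auto. Qed.

Lemma is_pdv_const i (Y : vec) u v : is_pdv i (fun _ _ => Y) u v (fun _ => 0).
Proof. intro c. apply is_pd_const. Qed.

Lemma is_pdv_vsum2 i (F : nat -> R -> R -> vec) u v L0 L1 :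
  is_pdv i (F 0%nat) u v L0 -> is_pdv i (F 1%nat) u v L1 ->
  is_pdv i (fun a b => vsum2 (fun j => F j a b)) u v (vadd L0 L1).
Proof. intros H0 H1 c. apply is_pd_plus; [apply H0 | apply H1]. Qed.

Lemma is_pd_mink i n F G u v L M : is_pdv i F u v L -> is_pdv i G u v M ->
  is_pd i (fun a b => mink n (F a b) (G a b)) u v (mink n L (G u v) + mink n (F u v) M).
Proof.
  intros H1 H2. unfold mink.
  eapply is_pd_ext; [intros; reflexivity | |].
  2:{ apply (is_pd_sum i (fun k a b => (if Nat.eqb k 0 then -1 else 1) * F a b k * G a b k)
        (fun k => (if Nat.eqb k 0 then -1 else 1) * L k * G u v k
                + (if Nat.eqb k 0 then -1 else 1) * F u v k * M k)).
      intros k _. eapply is_pd_ext; [intros; reflexivity | |].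
      2:{ apply is_pd_mult; [|apply H2].
          apply (is_pd_mult _ (fun _ _ => _)); [apply is_pd_const | apply H1]. }
      simpl; ring. }
  clear. induction n; simpl; [ring | rewrite IHn; ring].
Qed.

Lemma continuous_on2_near U f u v : open2 U -> U u v -> continuous_on2 U f ->
  forall eps : posreal, exists d : posreal, forall a b,
    Rabs (a - u) < d -> Rabs (b - v) < d -> U a b /\ Rabs (f a b - f u v) < eps.
Proof.
  intros HU Huv Hc eps. destruct (HU u v Huv) as [r [Hr Hb]].
  destruct (Hc u v Huv eps (cond_pos eps)) as [d [Hd Hfd]].
  assert (Hm : 0 < Rmin d r) by (apply Rmin_pos; lra).
  exists (mkposreal _ Hm). intros a b Ha Hb'. simpl in Ha, Hb'.
  assert (Hab : U a b) by (apply Hb; eapply Rlt_le_trans; eauto using Rmin_r).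
  split; [exact Hab|]. apply Hfd; auto; eapply Rlt_le_trans; eauto using Rmin_l.
Qed.

Section Schwarz.
Import Coquelicot.Coquelicot.

Lemma Derive_is_pd0 f a b l : is_pd 0 f a b l -> Derive (fun z => f z b) a = l.
Proof. intro H. apply is_derive_unique, is_derive_Reals, H. Qed.
Lemma Derive_is_pd1 f a b l : is_pd 1 f a b l -> Derive (fun z => f a z) b = l.
Proof. intro H. apply is_derive_unique, is_derive_Reals, H. Qed.
Lemma ex_derive_is_pd0 f a b l : is_pd 0 f a b l -> ex_derive (fun z => f z b) a.
Proof. intro H. exists l. apply is_derive_Reals, H. Qed.
Lemma ex_derive_is_pd1 f a b l : is_pd 1 f a b l -> ex_derive (fun z => f a z) b.
Proof. intro H. exists l. apply is_derive_Reals, H. Qed.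

Lemma pd_comm (U : R -> R -> Prop) f u v : open2 U -> smooth_on U f -> U u v ->
  pd 0 (pd 1 f) u v = pd 1 (pd 0 f) u v.
Proof.
  intros HU Hs Huv.
  assert (Hp : forall w i a b, U a b -> is_pd i (iter_pd w f) a b (pd i (iter_pd w f) a b))
    by (intros w i a b Hab; apply is_pd_pd, (proj1 (Hs w)); auto).
  set (d1 := fun a b => Derive (fun t => f a t) b).
  set (d0 := fun a b => Derive (fun t => f t b) a).
  assert (D1 : forall a b, U a b -> is_pd 0 d1 a b (pd 0 (pd 1 f) a b)).
  { intros a b Hab. apply (is_pd_local U _ (pd 1 f)); auto; [|exact (Hp (1%nat :: nil) 0%nat a b Hab)].
    intros a' b' H'. symmetry. exact (Derive_is_pd1 _ _ _ _ (Hp nil 1%nat a' b' H')). }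
  assert (D0 : forall a b, U a b -> is_pd 1 d0 a b (pd 1 (pd 0 f) a b)).
  { intros a b Hab. apply (is_pd_local U _ (pd 0 f)); auto; [|exact (Hp (0%nat :: nil) 1%nat a b Hab)].
    intros a' b' H'. symmetry. exact (Derive_is_pd0 _ _ _ _ (Hp nil 0%nat a' b' H')). }
  assert (F1 : forall a b, U a b ->
    Derive (fun z => Derive (fun t => f z t) b) a = pd 0 (pd 1 f) a b)
    by (intros; apply (Derive_is_pd0 d1); auto).
  assert (F0 : forall a b, U a b ->
    Derive (fun z => Derive (fun t => f t z) a) b = pd 1 (pd 0 f) a b)
    by (intros; apply (Derive_is_pd1 d0); auto).
  destruct (HU u v Huv) as [r [Hr Hb]].
  rewrite <- F1, <- F0 by auto.
  apply Schwarz.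
  - exists (mkposreal r Hr). intros a b Ha Hb'. simpl in Ha, Hb'.
    assert (Hab : U a b) by (apply Hb; assumption).
    repeat split.
    + exact (ex_derive_is_pd0 f a b _ (Hp nil 0%nat a b Hab)).
    + exact (ex_derive_is_pd1 f a b _ (Hp nil 1%nat a b Hab)).
    + exact (ex_derive_is_pd0 d1 a b _ (D1 a b Hab)).
    + exact (ex_derive_is_pd1 d0 a b _ (D0 a b Hab)).
  - intro eps.
    destruct (continuous_on2_near U _ u v HU Huv (proj2 (Hs (0%nat :: 1%nat :: nil))) eps)
      as [d Hd].
    exists d. intros a b Ha Hb'. destruct (Hd a b Ha Hb') as [Hab Hfe].
    rewrite (F1 a b), (F1 u v) by assumption. exact Hfe.
  - intro eps.
    destruct (continuous_on2_near U _ u v HU Huv (proj2 (Hs (1%nat :: 0%nat :: nil))) eps)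
      as [d Hd].
    exists d. intros a b Ha Hb'. destruct (Hd a b Ha Hb') as [Hab Hfe].
    rewrite (F0 a b), (F0 u v) by assumption. exact Hfe.
Qed.

End Schwarz.

Lemma smooth_on_pd U f i : smooth_on U f -> smooth_on U (pd i f).
Proof.
  intros H w. replace (iter_pd w (pd i f)) with (iter_pd (w ++ i :: nil) f); [apply H|].
  clear. induction w; simpl; congruence.
Qed.

(** * Minkowski algebra and null frames *)

Lemma vext (x y : vec) : (forall c : nat, x c = y c) -> x = y.
Proof. intro H. apply functional_extensionality. exact H. Qed.

Lemma vsum2E (f : nat -> vec) : vsum2 f = vadd (f 0%nat) (f 1%nat).
Proof. reflexivity. Qed.

Lemma mink_sym n x y : mink n x y = mink n y x.
Proof. unfold mink. apply sum_eq. intros; ring. Qed.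

Lemma mink_vadd_l n x y z : mink n (vadd x y) z = mink n x z + mink n y z.
Proof. unfold mink, vadd. induction n; simpl; [ring | rewrite IHn; ring]. Qed.
Lemma mink_vadd_r n x y z : mink n z (vadd x y) = mink n z x + mink n z y.
Proof. rewrite !(mink_sym n z). apply mink_vadd_l. Qed.
Lemma mink_vsub_l n x y z : mink n (vsub x y) z = mink n x z - mink n y z.
Proof. unfold mink, vsub. induction n; simpl; [ring | rewrite IHn; ring]. Qed.
Lemma mink_vsub_r n x y z : mink n z (vsub x y) = mink n z x - mink n z y.
Proof. rewrite !(mink_sym n z). apply mink_vsub_l. Qed.
Lemma mink_vscale_l n a x z : mink n (vscale a x) z = a * mink n x z.
Proof. unfold mink, vscale. induction n; simpl; [ring | rewrite IHn; ring]. Qed.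
Lemma mink_vscale_r n a x z : mink n z (vscale a x) = a * mink n z x.
Proof. rewrite !(mink_sym n z). apply mink_vscale_l. Qed.
Lemma mink_vopp_l n x z : mink n (vopp x) z = - mink n x z.
Proof. unfold mink, vopp. induction n; simpl; [ring | rewrite IHn; ring]. Qed.
Lemma mink_vopp_r n x z : mink n z (vopp x) = - mink n z x.
Proof. rewrite !(mink_sym n z). apply mink_vopp_l. Qed.
Lemma mink_0_l n z : mink n (fun _ => 0) z = 0.
Proof. unfold mink. induction n; simpl; [ring | rewrite IHn; ring]. Qed.
Lemma mink_0_r n z : mink n z (fun _ => 0) = 0.
Proof. rewrite mink_sym; apply mink_0_l. Qed.

Ltac mink_expand := repeat first
  [ rewrite mink_vadd_l | rewrite mink_vadd_r | rewrite mink_vsub_l | rewrite mink_vsub_r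
  | rewrite mink_vscale_l | rewrite mink_vscale_r | rewrite mink_vopp_l | rewrite mink_vopp_r
  | rewrite mink_0_l | rewrite mink_0_r ].

(* Identify [mink n y x] with [mink n x y] whenever both occur, so that [ring] and [field]
   can treat them as one atom. *)
Ltac mink_canon :=
  repeat match goal with
  | |- context [mink ?n ?x ?y] =>
      match goal with
      | |- context [mink n y x] =>
          tryif constr_eq x y then fail else rewrite (mink_sym n y x)
      end
  end.

Definition gform (g00 g01 g11 a0 a1 b0 b1 : R) : R :=
  a0 * b0 * g00 + a0 * b1 * g01 + a1 * b0 * g01 + a1 * b1 * g11.

Section PlanarNullFrame.
Variables g00 g01 g11 t0 t1 w0 w1 : R.
Hypothesis Htt : gform g00 g01 g11 t0 t1 t0 t1 = 0.
Hypothesis Hww : gform g00 g01 g11 w0 w1 w0 w1 = 0.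
Hypothesis Htw : gform g00 g01 g11 t0 t1 w0 w1 = -1.

(* Cramer's rule in the basis (t, w): the Gram matrix of (t, w) is [[0,-1],[-1,0]]. *)
Lemma null_frame_gram D : D = t0 * w1 - t1 * w0 ->
  D <> 0 /\ (g00 * g11 - g01 * g01) * (D * D) = -1 /\
  g00 * (D * D) = 2 * t1 * w1 /\ g11 * (D * D) = 2 * t0 * w0 /\
  g01 * (D * D) = - (t0 * w1 + t1 * w0).
Proof.
  unfold gform in *. intros HD.
  set (a := t0*t0*g00 + t0*t1*g01 + t1*t0*g01 + t1*t1*g11) in *.
  set (c := w0*w0*g00 + w0*w1*g01 + w1*w0*g01 + w1*w1*g11) in *.
  set (b := t0*w0*g00 + t0*w1*g01 + t1*w0*g01 + t1*w1*g11) in *.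
  assert (E1 : (g00*g11 - g01*g01) * (D*D) = a*c - b*b) by (unfold a, b, c; rewrite HD; ring).
  assert (E2 : g00 * (D*D) = a*w1*w1 - 2*b*w1*t1 + c*t1*t1) by (unfold a, b, c; rewrite HD; ring).
  assert (E3 : g11 * (D*D) = a*w0*w0 - 2*b*w0*t0 + c*t0*t0) by (unfold a, b, c; rewrite HD; ring).
  assert (E4 : g01 * (D*D) = - a*w1*w0 + b*(w1*t0+t1*w0) - c*t1*t0)
    by (unfold a, b, c; rewrite HD; ring).
  rewrite Htt, Htw, Hww in *.
  repeat split; [intro HD0; rewrite HD0 in E1; lra | lra | rewrite E2 | rewrite E3 | rewrite E4];
    ring.
Qed.

Lemma null_frame_expand y0 y1 :
  y0 = - (t0 * gform g00 g01 g11 w0 w1 y0 y1 + w0 * gform g00 g01 g11 t0 t1 y0 y1) /\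
  y1 = - (t1 * gform g00 g01 g11 w0 w1 y0 y1 + w1 * gform g00 g01 g11 t0 t1 y0 y1).
Proof.
  destruct (null_frame_gram _ eq_refl) as [HD [_ [E2 [E3 E4]]]].
  set (D := t0 * w1 - t1 * w0) in *.
  assert (HDD : D * D <> 0) by (apply Rmult_integral_contrapositive; auto).
  assert (F00 : g00 = 2 * t1 * w1 / (D*D)) by (rewrite <- E2; field; auto).
  assert (F11 : g11 = 2 * t0 * w0 / (D*D)) by (rewrite <- E3; field; auto).
  assert (F01 : g01 = - (t0 * w1 + t1 * w0) / (D*D)) by (rewrite <- E4; field; auto).
  unfold gform. rewrite F00, F11, F01. unfold D. split; field; fold D; auto.
Qed.

(* [d], [T], [W] stand for the derivatives of g, t, w along one coordinate, and [z] for
   that of the covector g(t, .); the hypotheses are the differentiated frame relations. *)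
Lemma null_frame_deriv d00 d01 d11 T0 T1 W0 W1 z0 z1 :
  gform d00 d01 d11 t0 t1 t0 t1 + 2 * gform g00 g01 g11 T0 T1 t0 t1 = 0 ->
  gform d00 d01 d11 t0 t1 w0 w1 + gform g00 g01 g11 T0 T1 w0 w1
    + gform g00 g01 g11 t0 t1 W0 W1 = 0 ->
  gform d00 d01 d11 w0 w1 w0 w1 + 2 * gform g00 g01 g11 w0 w1 W0 W1 = 0 ->
  d00 * t0 + g00 * T0 + (d01 * t1 + g01 * T1) = z0 ->
  d01 * t0 + g01 * T0 + (d11 * t1 + g11 * T1) = z1 ->
  t0 * z0 + t1 * z1 = / 2 * gform d00 d01 d11 t0 t1 t0 t1 /\
  W0 = / 2 * gform d00 d01 d11 w0 w1 w0 w1 * t0 + (w0 * z0 + w1 * z1) * w0 /\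
  W1 = / 2 * gform d00 d01 d11 w0 w1 w0 w1 * t1 + (w0 * z0 + w1 * z1) * w1.
Proof.
  intros Ett Etw Eww Ez0 Ez1.
  destruct (null_frame_expand W0 W1) as [F0 F1].
  assert (Gw : gform g00 g01 g11 w0 w1 W0 W1 = - / 2 * gform d00 d01 d11 w0 w1 w0 w1) by lra.
  assert (Gt : gform g00 g01 g11 t0 t1 W0 W1 = - (w0 * z0 + w1 * z1))
    by (rewrite <- Ez0, <- Ez1; unfold gform in *; lra).
  split; [| split].
  - rewrite <- Ez0, <- Ez1. unfold gform in *. lra.
  - rewrite F0 at 1. rewrite Gw, Gt. ring.
  - rewrite F1 at 1. rewrite Gw, Gt. ring.
Qed.

End PlanarNullFrame.

Lemma sym2_kernel_rank1 t0 t1 n00 n01 n11 :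
  t0 * t0 + t1 * t1 <> 0 -> t0 * n00 + t1 * n01 = 0 -> t0 * n01 + t1 * n11 = 0 ->
  exists c, n00 = c * (t1 * t1) /\ n01 = - c * (t0 * t1) /\ n11 = c * (t0 * t0).
Proof.
  intros Hs R0 R1. exists ((n00 + n11) / (t0 * t0 + t1 * t1)).
  assert (B0 : t1 * n01 = - t0 * n00) by lra.
  assert (B1 : t0 * n01 = - t1 * n11) by lra.
  assert (A : n00 * (t0 * t0) = n11 * (t1 * t1)).
  { replace (n00 * (t0 * t0)) with (t0 * (t0 * n00 + t1 * n01) - t0 * t1 * n01) by ring.
    replace (n11 * (t1 * t1)) with (t1 * (t0 * n01 + t1 * n11) - t0 * t1 * n01) by ring.
    rewrite R0, R1. ring. }
  repeat split; apply (Rmult_eq_reg_r (t0 * t0 + t1 * t1)); auto; field_simplify; auto.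
  - nra.
  - replace (n01 * t0 ^ 2 + n01 * t1 ^ 2) with (t0 * (t0 * n01) + t1 * (t1 * n01)) by ring.
    rewrite B0, B1. nra.
  - nra.
Qed.

(** * Tangential and normal projections *)

Section Projections.
Variable n : nat.
Variable X : R -> R -> vec.

Lemma tvecE a u v :
  tvec X a u v = vadd (vscale (a 0%nat) (Xd X 0 u v)) (vscale (a 1%nat) (Xd X 1 u v)).
Proof. reflexivity. Qed.
Lemma tanpE Y u v : tanp n X Y u v =
  vadd (vscale (tcoef n X Y u v 0) (Xd X 0 u v)) (vscale (tcoef n X Y u v 1) (Xd X 1 u v)).
Proof. reflexivity. Qed.
Lemma tcoefE Y u v i : tcoef n X Y u v i =
  ginv n X i 0 u v * mink n Y (Xd X 0 u v) + ginv n X i 1 u v * mink n Y (Xd X 1 u v).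
Proof. reflexivity. Qed.

Lemma gmet_sym i j u v : gmet n X i j u v = gmet n X j i u v.
Proof. apply mink_sym. Qed.

Lemma mink_tvec a b u v : mink n (tvec X a u v) (tvec X b u v) =
  gform (gmet n X 0 0 u v) (gmet n X 0 1 u v) (gmet n X 1 1 u v)
    (a 0%nat) (a 1%nat) (b 0%nat) (b 1%nat).
Proof. rewrite !tvecE. mink_expand. unfold gform, gmet. mink_canon. ring. Qed.

Section Nondegenerate.
Variables u v : R.
Hypothesis Hd : gdet n X u v <> 0.

(* Every index [i >= 1] of [pd] denotes the v-direction, hence the [change] below. *)
Lemma mink_norp_Xd Y i : mink n (norp n X Y u v) (Xd X i u v) = 0.
Proof.
  destruct i; [|change (Xd X (S i)) with (Xd X 1)].
  all: unfold norp; rewrite tanpE, !tcoefE; mink_expand.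
  all: revert Hd; cbn [ginv]; unfold gdet, gmet; mink_canon; intro; field; auto.
Qed.

Lemma mink_norp_tvec Y a : mink n (norp n X Y u v) (tvec X a u v) = 0.
Proof. rewrite tvecE. mink_expand. rewrite !mink_norp_Xd. ring. Qed.

Lemma mink_norp_l Y Y' : mink n (norp n X Y u v) Y' = mink n (norp n X Y u v) (norp n X Y' u v).
Proof. unfold norp at 3. rewrite mink_vsub_r. unfold tanp. rewrite mink_norp_tvec. ring. Qed.

Lemma mink_norp_r Y Y' : mink n Y (norp n X Y' u v) = mink n (norp n X Y u v) (norp n X Y' u v).
Proof. rewrite (mink_sym n Y), mink_norp_l. apply mink_sym. Qed.

Lemma mink_norp_norp Y Y' : mink n (norp n X Y u v) (norp n X Y' u v) =
  mink n Y Y' - (tcoef n X Y u v 0 * mink n (Xd X 0 u v) Y'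
                 + tcoef n X Y u v 1 * mink n (Xd X 1 u v) Y').
Proof. rewrite <- mink_norp_l. unfold norp. rewrite tanpE. mink_expand. ring. Qed.

Lemma tcoef_norp Y i : tcoef n X (norp n X Y u v) u v i = 0.
Proof. rewrite tcoefE, !mink_norp_Xd. ring. Qed.

Lemma norp_norp Y : norp n X (norp n X Y u v) u v = norp n X Y u v.
Proof.
  unfold norp at 1. rewrite tanpE, !tcoef_norp.
  apply vext; intro c. unfold vsub, vadd, vscale. ring.
Qed.

Lemma norp_Xd i : norp n X (Xd X i u v) u v = (fun _ => 0).
Proof.
  destruct i; [|change (Xd X (S i)) with (Xd X 1)].
  all: apply vext; intro c; unfold norp; rewrite tanpE, !tcoefE.
  all: revert Hd; cbn [ginv]; unfold gdet, gmet; unfold vsub, vadd, vscale; mink_canon; intro.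
  all: field; auto.
Qed.

End Nondegenerate.

Lemma tcoef_vadd Y Y' u v i :
  tcoef n X (vadd Y Y') u v i = tcoef n X Y u v i + tcoef n X Y' u v i.
Proof. rewrite !tcoefE, !mink_vadd_l. ring. Qed.
Lemma tcoef_vsub Y Y' u v i :
  tcoef n X (vsub Y Y') u v i = tcoef n X Y u v i - tcoef n X Y' u v i.
Proof. rewrite !tcoefE, !mink_vsub_l. ring. Qed.
Lemma tcoef_vscale a Y u v i : tcoef n X (vscale a Y) u v i = a * tcoef n X Y u v i.
Proof. rewrite !tcoefE, !mink_vscale_l. ring. Qed.
Lemma tcoef_0 u v i : tcoef n X (fun _ => 0) u v i = 0.
Proof. rewrite !tcoefE, !mink_0_l. ring. Qed.

Lemma norp_vadd Y Y' u v : norp n X (vadd Y Y') u v = vadd (norp n X Y u v) (norp n X Y' u v).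
Proof.
  apply vext; intro c. unfold norp. rewrite !tanpE, !tcoef_vadd.
  unfold vsub, vadd, vscale. ring.
Qed.
Lemma norp_vsub Y Y' u v : norp n X (vsub Y Y') u v = vsub (norp n X Y u v) (norp n X Y' u v).
Proof.
  apply vext; intro c. unfold norp. rewrite !tanpE, !tcoef_vsub.
  unfold vsub, vadd, vscale. ring.
Qed.
Lemma norp_vscale a Y u v : norp n X (vscale a Y) u v = vscale a (norp n X Y u v).
Proof.
  apply vext; intro c. unfold norp. rewrite !tanpE, !tcoef_vscale.
  unfold vsub, vadd, vscale. ring.
Qed.
Lemma norp_0 u v : norp n X (fun _ => 0) u v = (fun _ => 0).
Proof.
  apply vext; intro c. unfold norp. rewrite !tanpE, !tcoef_0.
  unfold vsub, vadd, vscale. ring.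
Qed.

Lemma norp_IIc i j u v : gdet n X u v <> 0 -> norp n X (IIc n X i j u v) u v = IIc n X i j u v.
Proof. intro Hd. apply norp_norp, Hd. Qed.

Definition null_frame (t w : nat -> R) (u v : R) : Prop :=
  mink n (tvec X t u v) (tvec X t u v) = 0 /\
  mink n (tvec X w u v) (tvec X w u v) = 0 /\
  mink n (tvec X t u v) (tvec X w u v) = -1.

Definition frame_det (t w : nat -> R) : R := t 0%nat * w 1%nat - t 1%nat * w 0%nat.

Section NullFrame.
Variables (t w : nat -> R) (u v : R).
Hypothesis Hframe : null_frame t w u v.

Lemma null_frame_gform :
  let g := gform (gmet n X 0 0 u v) (gmet n X 0 1 u v) (gmet n X 1 1 u v) in
  g (t 0%nat) (t 1%nat) (t 0%nat) (t 1%nat) = 0 /\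
  g (w 0%nat) (w 1%nat) (w 0%nat) (w 1%nat) = 0 /\
  g (t 0%nat) (t 1%nat) (w 0%nat) (w 1%nat) = -1.
Proof. unfold null_frame in Hframe. rewrite !mink_tvec in Hframe. exact Hframe. Qed.

Let gram := null_frame_gram _ _ _ _ _ _ _
  (proj1 null_frame_gform) (proj1 (proj2 null_frame_gform)) (proj2 (proj2 null_frame_gform))
  _ eq_refl.

Lemma frame_det_neq0 : frame_det t w <> 0.
Proof. exact (proj1 gram). Qed.

Let DD := frame_det t w * frame_det t w.

Lemma DD_neq0 : DD <> 0.
Proof. apply Rmult_integral_contrapositive; split; apply frame_det_neq0. Qed.

Lemma null_frame_gmet :
  gmet n X 0 0 u v = 2 * t 1%nat * w 1%nat / DD /\
  gmet n X 1 1 u v = 2 * t 0%nat * w 0%nat / DD /\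
  gmet n X 0 1 u v = - (t 0%nat * w 1%nat + t 1%nat * w 0%nat) / DD /\
  gmet n X 1 0 u v = - (t 0%nat * w 1%nat + t 1%nat * w 0%nat) / DD.
Proof.
  destruct gram as [_ [_ [E00 [E11 E01]]]]. pose proof frame_det_neq0.
  rewrite (gmet_sym 1 0).
  repeat split; [rewrite <- E00 | rewrite <- E11 | rewrite <- E01 | rewrite <- E01];
    unfold DD, frame_det in *; field; auto.
Qed.

Lemma null_frame_gdet : gdet n X u v = -1 / DD.
Proof.
  destruct gram as [_ [E _]]. pose proof frame_det_neq0.
  unfold gdet. rewrite (gmet_sym 1 0), <- E. unfold DD, frame_det. field; auto.
Qed.

Lemma null_frame_gdet_neq0 : gdet n X u v <> 0.
Proof.
  rewrite null_frame_gdet. unfold Rdiv. apply Rmult_integral_contrapositive.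
  split; [lra | apply Rinv_neq_0_compat, DD_neq0].
Qed.

Lemma null_frame_ginv :
  ginv n X 0 0 u v = - (t 0%nat * w 0%nat + w 0%nat * t 0%nat) /\
  ginv n X 0 1 u v = - (t 0%nat * w 1%nat + w 0%nat * t 1%nat) /\
  ginv n X 1 0 u v = - (t 1%nat * w 0%nat + w 1%nat * t 0%nat) /\
  ginv n X 1 1 u v = - (t 1%nat * w 1%nat + w 1%nat * t 1%nat).
Proof.
  destruct null_frame_gmet as [F00 [F11 [F01 F10]]]. pose proof frame_det_neq0.
  repeat split; cbn [ginv]; rewrite null_frame_gdet, ?F00, ?F01, ?F10, ?F11;
    unfold DD, frame_det in *; field; auto.
Qed.

End NullFrame.

End Projections.

(** * Smooth parametrized surfaces *)

Ltac pd_rules atoms := repeat first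
  [ atoms
  | eapply is_pd_const | eapply is_pd_div | eapply is_pd_plus | eapply is_pd_minus
  | eapply is_pd_mult | eapply is_pd_opp | eapply is_pd_mink | eapply is_pd_sum2
  | eapply is_pdv_vsum2 | eapply is_pdv_vadd | eapply is_pdv_vsub | eapply is_pdv_vscale
  | eapply is_pdv_vopp | eapply is_pdv_const ].

Section SmoothSurface.
Variable n : nat.
Variable U : R -> R -> Prop.
Variable X : R -> R -> vec.
Hypothesis HU : open2 U.
Hypothesis HX : forall c, smooth_on U (fun a b => X a b c).

Lemma has_pd_X c w i a b : U a b -> has_pd i (iter_pd w (fun a b => X a b c)) a b.
Proof. intro H. apply (proj1 (HX c w)); auto. Qed.

Lemma is_pdv_Xd k i a b : U a b -> is_pdv k (Xd X i) a b (pdv k (Xd X i) a b).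
Proof. intro H. apply is_pdv_pdv. intro c. exact (has_pd_X c (i :: nil) k a b H). Qed.

Lemma is_pdv_Xdd k i j a b : U a b ->
  is_pdv k (pdv i (Xd X j)) a b (pdv k (pdv i (Xd X j)) a b).
Proof. intro H. apply is_pdv_pdv. intro c. exact (has_pd_X c (i :: j :: nil) k a b H). Qed.

Lemma Xdd_sym a b : U a b -> pdv 1 (Xd X 0) a b = pdv 0 (Xd X 1) a b.
Proof.
  intro H. apply vext; intro c. symmetry. exact (pd_comm U (fun a b => X a b c) a b HU (HX c) H).
Qed.

Lemma Xddd_sym_l k a b : U a b -> pdv k (pdv 1 (Xd X 0)) a b = pdv k (pdv 0 (Xd X 1)) a b.
Proof.
  intro H. apply vext; intro c. unfold pdv at 1 3.
  apply (pd_local U); auto; [|exact (has_pd_X c (1 :: 0 :: nil)%nat k a b H)].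
  intros a' b' H'. rewrite (Xdd_sym a' b' H'). reflexivity.
Qed.

Lemma Xddd_sym_r j a b : U a b -> pdv 1 (pdv 0 (Xd X j)) a b = pdv 0 (pdv 1 (Xd X j)) a b.
Proof.
  intro H. apply vext; intro c. symmetry.
  exact (pd_comm U (pd j (fun a b => X a b c)) a b HU (smooth_on_pd _ _ _ (HX c)) H).
Qed.

Lemma IIc_sym a b : U a b -> IIc n X 1 0 a b = IIc n X 0 1 a b.
Proof. intro H. unfold IIc. rewrite (Xdd_sym a b H). reflexivity. Qed.

Definition dgmet (k i j : nat) (a b : R) : R :=
  mink n (pdv k (Xd X i) a b) (Xd X j a b) + mink n (Xd X i a b) (pdv k (Xd X j) a b).

Lemma dgmet_sym k i j a b : dgmet k i j a b = dgmet k j i a b.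
Proof. unfold dgmet. rewrite (mink_sym n (pdv k (Xd X i) a b)), (mink_sym n (Xd X i a b)). ring. Qed.

Lemma is_pd_gmet k i j a b : U a b -> is_pd k (gmet n X i j) a b (dgmet k i j a b).
Proof. intro H. apply is_pd_mink; apply is_pdv_Xd; auto. Qed.

Lemma is_pd_pd_gmet k i j l a b : U a b -> is_pd k (pd i (gmet n X j l)) a b
  (mink n (pdv k (pdv i (Xd X j)) a b) (Xd X l a b) + mink n (pdv i (Xd X j) a b) (pdv k (Xd X l) a b)
   + (mink n (pdv k (Xd X j) a b) (pdv i (Xd X l) a b)
      + mink n (Xd X j a b) (pdv k (pdv i (Xd X l)) a b))).
Proof.
  intro H. apply (is_pd_local U k (fun a b => mink n (pdv i (Xd X j) a b) (Xd X l a b)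
      + mink n (Xd X j a b) (pdv i (Xd X l) a b))); auto.
  - intros a' b' H'. symmetry. apply pd_eq, is_pd_gmet; auto.
  - apply is_pd_plus; apply is_pd_mink; auto using is_pdv_Xd, is_pdv_Xdd.
Qed.

Ltac metric_atoms a b H :=
  first [ apply (is_pd_gmet _ _ _ a b H) | apply (is_pd_pd_gmet _ _ _ _ a b H)
        | apply (is_pdv_Xd _ _ a b H) | apply (is_pdv_Xdd _ _ _ a b H) ].

Lemma Kgauss_coord u v : U u v -> gdet n X u v <> 0 ->
  Kgauss n X u v =
  (mink n (pdv 0 (Xd X 0) u v) (pdv 1 (Xd X 1) u v) - mink n (pdv 0 (Xd X 1) u v) (pdv 0 (Xd X 1) u v)
   - sum2 (fun a => sum2 (fun b => ginv n X a b u v *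
       (mink n (pdv 0 (Xd X 0) u v) (Xd X a u v) * mink n (pdv 1 (Xd X 1) u v) (Xd X b u v)
        - mink n (pdv 0 (Xd X 1) u v) (Xd X a u v) * mink n (pdv 0 (Xd X 1) u v) (Xd X b u v)))))
  / gdet n X u v.
Proof.
  intros H Hd.
  unfold Kgauss, Rcoef, sum2.
  erewrite (pd_eq 0 (Gam n X 0 1 1) u v), (pd_eq 0 (Gam n X 1 1 1) u v),
    (pd_eq 1 (Gam n X 0 0 1) u v), (pd_eq 1 (Gam n X 1 0 1) u v).
  2-5: unfold Gam, sum2; cbn [ginv]; unfold gdet; pd_rules ltac:(metric_atoms u v H); exact Hd.
  unfold Gam, sum2. cbn [ginv].
  rewrite !(pd_eq _ _ _ _ _ (is_pd_gmet _ _ _ u v H)).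
  revert Hd. unfold dgmet, gdet, gmet, Rsqr.
  do 3 rewrite ?(Xddd_sym_r _ u v H), ?(Xddd_sym_l _ u v H), ?(Xdd_sym u v H).
  mink_canon. intro Hd. field. exact Hd.
Qed.

Lemma Kgauss_IIc u v : U u v -> gdet n X u v <> 0 ->
  Kgauss n X u v =
  (mink n (IIc n X 0 0 u v) (IIc n X 1 1 u v) - mink n (IIc n X 0 1 u v) (IIc n X 0 1 u v))
  / gdet n X u v.
Proof.
  intros H Hd. rewrite (Kgauss_coord u v H Hd). unfold IIc.
  rewrite !mink_norp_norp, !tcoefE by exact Hd.
  unfold sum2. revert Hd. unfold gdet, gmet. cbn [ginv]. unfold gdet, gmet.
  mink_canon. intro Hd. field. exact Hd.
Qed.

Lemma Kgauss_null_frame (t w : nat -> R) u v : U u v -> null_frame n X t w u v ->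
  Kgauss n X u v = mink n (Hvec n X u v) (Hvec n X u v) - mink n (II n X w w u v) (II n X t t u v).
Proof.
  intros H Hf. pose proof (null_frame_gdet_neq0 n X t w u v Hf) as Hd.
  destruct (null_frame_ginv n X t w u v Hf) as [I00 [I01 [I10 I11]]].
  rewrite (Kgauss_IIc u v H Hd), (null_frame_gdet n X t w u v Hf).
  pose proof (frame_det_neq0 n X t w u v Hf). unfold frame_det in *.
  unfold Hvec, II. repeat (rewrite vsum2E; cbv beta). mink_expand.
  rewrite I00, I01, I10, I11, !(IIc_sym u v H). mink_canon. field. auto.
Qed.

Lemma is_pd_ginv k i j a b : U a b -> gdet n X a b <> 0 ->
  is_pd k (ginv n X i j) a b (pd k (ginv n X i j) a b).
Proof.
  intros H Hd. apply is_pd_pd, has_pdE.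
  destruct i as [|i]; destruct j as [|j]; eexists; cbn [ginv]; unfold gdet in *;
    pd_rules ltac:(metric_atoms a b H); exact Hd.
Qed.

Lemma pd_ginv k i j a b : U a b -> gdet n X a b <> 0 ->
  pd k (ginv n X i j) a b = - sum2 (fun l => sum2 (fun m =>
    ginv n X i l a b * dgmet k l m a b * ginv n X m j a b)).
Proof.
  intros H Hd. apply pd_eq. revert Hd.
  destruct i as [|i]; destruct j as [|j]; cbn [ginv]; unfold gdet; intro Hd;
    (eapply is_pd_ext; [intros; reflexivity | | pd_rules ltac:(metric_atoms a b H); exact Hd]);
    unfold sum2; cbn [ginv]; unfold gdet; rewrite (dgmet_sym k 1 0), (gmet_sym n X 1 0) in *;
    unfold Rsqr; field; exact Hd.
Qed.

Lemma is_pdv_norp_ex F L k a b : U a b -> gdet n X a b <> 0 -> is_pdv k F a b L ->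
  exists d0 d1, is_pdv k (fun a b => norp n X (F a b) a b) a b
   (vsub L (vadd (vadd (vscale d0 (Xd X 0 a b))
                       (vscale (tcoef n X (F a b) a b 0) (pdv k (Xd X 0) a b)))
                 (vadd (vscale d1 (Xd X 1 a b))
                       (vscale (tcoef n X (F a b) a b 1) (pdv k (Xd X 1) a b))))).
Proof.
  intros H Hd HF. do 2 eexists.
  apply is_pdv_vsub; [exact HF|].
  apply is_pdv_vadd; (apply is_pdv_vscale; [| apply is_pdv_Xd, H]);
  unfold tcoef, sum2;
  pd_rules ltac:(first [apply (is_pd_ginv _ _ _ a b H Hd) | exact HF | metric_atoms a b H]).
Qed.

Lemma is_pdv_norp F L k a b : U a b -> gdet n X a b <> 0 -> is_pdv k F a b L ->
  is_pdv k (fun a b => norp n X (F a b) a b) a b (pdv k (fun a b => norp n X (F a b) a b) a b).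
Proof.
  intros H Hd HF. destruct (is_pdv_norp_ex F L k a b H Hd HF) as [d0 [d1 HD]].
  apply is_pdv_pdv. intro c. eapply is_pd_has, HD.
Qed.

Lemma norp_pdv_norp F L k a b : U a b -> gdet n X a b <> 0 -> is_pdv k F a b L ->
  norp n X (pdv k (fun a b => norp n X (F a b) a b) a b) a b =
  vsub (norp n X L a b)
       (vadd (vscale (tcoef n X (F a b) a b 0) (IIc n X k 0 a b))
             (vscale (tcoef n X (F a b) a b 1) (IIc n X k 1 a b))).
Proof.
  intros H Hd HF. destruct (is_pdv_norp_ex F L k a b H Hd HF) as [d0 [d1 HD]].
  rewrite (pdv_eq _ _ _ _ _ HD), norp_vsub, !norp_vadd, !norp_vscale, !norp_Xd by exact Hd.
  apply vext; intro c. unfold IIc, vsub, vadd, vscale. ring.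
Qed.

Lemma norp_pdv_IIc k i j a b : U a b -> gdet n X a b <> 0 ->
  norp n X (pdv k (IIc n X i j) a b) a b =
  vsub (norp n X (pdv k (pdv i (Xd X j)) a b) a b)
       (vadd (vscale (tcoef n X (pdv i (Xd X j) a b) a b 0) (IIc n X k 0 a b))
             (vscale (tcoef n X (pdv i (Xd X j) a b) a b 1) (IIc n X k 1 a b))).
Proof. intros H Hd. exact (norp_pdv_norp _ _ k a b H Hd (is_pdv_Xdd k i j a b H)). Qed.

Lemma is_pdv_IIc k i j a b : U a b -> gdet n X a b <> 0 ->
  is_pdv k (IIc n X i j) a b (pdv k (IIc n X i j) a b).
Proof. intros H Hd. exact (is_pdv_norp _ _ k a b H Hd (is_pdv_Xdd k i j a b H)). Qed.

Lemma is_pdv_Hvec k a b : U a b -> gdet n X a b <> 0 ->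
  is_pdv k (Hvec n X) a b (pdv k (Hvec n X) a b).
Proof.
  intros H Hd. apply is_pdv_pdv. intro c. apply has_pdE.
  cut (exists L, is_pdv k (Hvec n X) a b L); [intros [L HL]; eexists; apply HL|].
  eexists. unfold Hvec.
  pd_rules ltac:(first [apply (is_pd_ginv _ _ _ a b H Hd) | apply (is_pdv_IIc _ _ _ a b H Hd)]).
Qed.

End SmoothSurface.

(** * Surfaces with a canonical null direction *)

Section CanonicalNullDirection.
Variable n : nat.
Variable U : R -> R -> Prop.
Variable X : R -> R -> vec.
Hypothesis HU : open2 U.
Hypothesis HX : forall c, smooth_on U (fun a b => X a b c).
Variable Z : vec.
Variable w : R -> R -> nat -> R.
Hypothesis Hframe : forall a b, U a b -> null_frame n X (tcoef n X Z a b) (w a b) a b.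

Local Notation tZ a b := (tcoef n X Z a b).
Local Notation g2 a b := (gform (gmet n X 0 0 a b) (gmet n X 0 1 a b) (gmet n X 1 1 a b)).
Local Notation dg2 k a b :=
  (gform (dgmet n X k 0 0 a b) (dgmet n X k 0 1 a b) (dgmet n X k 1 1 a b)).

Lemma gdet_neq0 a b : U a b -> gdet n X a b <> 0.
Proof. intro H. exact (null_frame_gdet_neq0 _ _ _ _ _ _ (Hframe a b H)). Qed.

Lemma tZ_norm2_neq0 a b : U a b -> tZ a b 0 * tZ a b 0 + tZ a b 1 * tZ a b 1 <> 0.
Proof.
  intros H E. apply (frame_det_neq0 _ _ _ _ _ _ (Hframe a b H)). unfold frame_det.
  assert (E0 : tZ a b 0 = 0) by nra. assert (E1 : tZ a b 1 = 0) by nra.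
  rewrite E0, E1. ring.
Qed.

Ltac frame_atoms a b H :=
  first [ apply (is_pd_gmet n U X HX _ _ _ a b H) | apply (is_pdv_Xd U X HX _ _ a b H)
        | apply (is_pdv_Xdd U X HX _ _ _ a b H)
        | apply (is_pd_ginv n U X HX _ _ _ a b H (gdet_neq0 a b H)) ].

Lemma is_pd_tZ k i a b : U a b -> is_pd k (fun a b => tZ a b i) a b (pd k (fun a b => tZ a b i) a b).
Proof.
  intro H. apply is_pd_pd, has_pdE. eexists. unfold tcoef, sum2. pd_rules ltac:(frame_atoms a b H).
Qed.

(* Contracting g^{ij} = -(t^i w^j + w^i t^j) with t in the Euclidean sense solves for w,
   so W is a rational function of Z^T and the metric. *)
Definition w_formula (i : nat) (a b : R) : R :=
  let t0 := tZ a b 0 in let t1 := tZ a b 1 in let s := t0 * t0 + t1 * t1 in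
  (- (ginv n X i 0 a b * t0 + ginv n X i 1 a b * t1)
   + tZ a b i * ((t0 * (ginv n X 0 0 a b * t0 + ginv n X 0 1 a b * t1)
                + t1 * (ginv n X 1 0 a b * t0 + ginv n X 1 1 a b * t1)) / (2 * s))) / s.

Lemma w_formulaE i a b : U a b -> (i = 0 \/ i = 1)%nat -> w a b i = w_formula i a b.
Proof.
  intros H Hi. pose proof (tZ_norm2_neq0 a b H).
  destruct (null_frame_ginv _ _ _ _ _ _ (Hframe a b H)) as [I00 [I01 [I10 I11]]].
  unfold w_formula. cbv zeta.
  destruct Hi as [-> | ->]; rewrite I00, I01, I10, I11; field; auto.
Qed.

Lemma is_pd_w k i a b : U a b -> (i = 0 \/ i = 1)%nat ->
  is_pd k (fun a b => w a b i) a b (pd k (fun a b => w a b i) a b).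
Proof.
  intros H Hi. apply is_pd_pd, has_pdE. eexists.
  eapply (is_pd_local U _ (w_formula i)); auto.
  - intros a' b' H'. symmetry. apply w_formulaE; auto.
  - unfold w_formula; cbv zeta.
    pd_rules ltac:(first [frame_atoms a b H | apply (is_pd_tZ _ _ a b H)]).
    all: first [ apply (tZ_norm2_neq0 a b H)
               | apply Rmult_integral_contrapositive_currified; [discrR | apply (tZ_norm2_neq0 a b H)] ].
Qed.

Ltac frame_jet_atoms a b H :=
  first [ frame_atoms a b H | apply (is_pd_tZ _ _ a b H)
        | apply (is_pd_w _ 0 a b H (or_introl eq_refl))
        | apply (is_pd_w _ 1 a b H (or_intror eq_refl)) ].

Lemma gform_const_deriv (p q : R -> R -> nat -> R) c k a b : U a b ->
  (forall a b, U a b -> g2 a b (p a b 0%nat) (p a b 1%nat) (q a b 0%nat) (q a b 1%nat) = c) ->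
  (forall i, (i = 0 \/ i = 1)%nat ->
     is_pd k (fun a b => p a b i) a b (pd k (fun a b => p a b i) a b)) ->
  (forall i, (i = 0 \/ i = 1)%nat ->
     is_pd k (fun a b => q a b i) a b (pd k (fun a b => q a b i) a b)) ->
  dg2 k a b (p a b 0%nat) (p a b 1%nat) (q a b 0%nat) (q a b 1%nat)
  + g2 a b (pd k (fun a b => p a b 0%nat) a b) (pd k (fun a b => p a b 1%nat) a b)
      (q a b 0%nat) (q a b 1%nat)
  + g2 a b (p a b 0%nat) (p a b 1%nat)
      (pd k (fun a b => q a b 0%nat) a b) (pd k (fun a b => q a b 1%nat) a b)
  = 0.
Proof.
  intros H Hc Hp Hq.
  eassert (Hl : is_pd k
    (fun a b => g2 a b (p a b 0%nat) (p a b 1%nat) (q a b 0%nat) (q a b 1%nat)) a b _).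
  { unfold gform. pd_rules ltac:(first [ frame_atoms a b H
      | apply (Hp 0%nat (or_introl eq_refl)) | apply (Hp 1%nat (or_intror eq_refl))
      | apply (Hq 0%nat (or_introl eq_refl)) | apply (Hq 1%nat (or_intror eq_refl)) ]). }
  pose proof (is_pd_local_unique U k _ (fun _ _ => c) a b _ 0 HU H Hc Hl (is_pd_const k c a b)).
  unfold gform in *. lra.
Qed.

Lemma gmet_tZ j a b : U a b -> (j = 0 \/ j = 1)%nat ->
  gmet n X j 0 a b * tZ a b 0 + gmet n X j 1 a b * tZ a b 1 = mink n Z (Xd X j a b).
Proof.
  intros H Hj. pose proof (gdet_neq0 a b H) as Hd. revert Hd.
  unfold tcoef, sum2. cbn [ginv]. unfold gdet, gmet.
  destruct Hj as [-> | ->]; mink_canon; intro; field; auto.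
Qed.

Lemma deriv_gmet_tZ k j a b : U a b -> (j = 0 \/ j = 1)%nat ->
  dgmet n X k j 0 a b * tZ a b 0 + gmet n X j 0 a b * pd k (fun a b => tZ a b 0) a b
  + (dgmet n X k j 1 a b * tZ a b 1 + gmet n X j 1 a b * pd k (fun a b => tZ a b 1) a b)
  = mink n Z (pdv k (Xd X j) a b).
Proof.
  intros H Hj.
  eassert (Hl : is_pd k (fun a b => gmet n X j 0 a b * tZ a b 0 + gmet n X j 1 a b * tZ a b 1) a b _)
    by pd_rules ltac:(frame_jet_atoms a b H).
  eassert (Hr : is_pd k (fun a b => mink n Z (Xd X j a b)) a b _)
    by pd_rules ltac:(frame_jet_atoms a b H).
  pose proof (is_pd_local_unique U k _ _ a b _ _ HU H (fun a' b' H' => gmet_tZ j a' b' H' Hj) Hl Hr).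
  rewrite mink_0_l in *. lra.
Qed.

Lemma frame_derivs k a b : U a b ->
  tZ a b 0 * mink n Z (pdv k (Xd X 0) a b) + tZ a b 1 * mink n Z (pdv k (Xd X 1) a b)
   = / 2 * dg2 k a b (tZ a b 0) (tZ a b 1) (tZ a b 0) (tZ a b 1) /\
  pd k (fun a b => w a b 0) a b = / 2 * dg2 k a b (w a b 0) (w a b 1) (w a b 0) (w a b 1) * tZ a b 0
      + (w a b 0 * mink n Z (pdv k (Xd X 0) a b) + w a b 1 * mink n Z (pdv k (Xd X 1) a b)) * w a b 0 /\
  pd k (fun a b => w a b 1) a b = / 2 * dg2 k a b (w a b 0) (w a b 1) (w a b 0) (w a b 1) * tZ a b 1
      + (w a b 0 * mink n Z (pdv k (Xd X 0) a b) + w a b 1 * mink n Z (pdv k (Xd X 1) a b)) * w a b 1.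
Proof.
  intro H. destruct (null_frame_gform _ _ _ _ _ _ (Hframe a b H)) as [H1 [H2 H3]].
  assert (HT : forall i, (i = 0 \/ i = 1)%nat ->
    is_pd k (fun a b => tZ a b i) a b (pd k (fun a b => tZ a b i) a b))
    by (intros i _; apply is_pd_tZ, H).
  assert (HW : forall i, (i = 0 \/ i = 1)%nat ->
    is_pd k (fun a b => w a b i) a b (pd k (fun a b => w a b i) a b))
    by (intros i Hi; apply is_pd_w; auto).
  pose proof (gform_const_deriv _ _ 0 k a b H
    (fun a b H => proj1 (null_frame_gform _ _ _ _ _ _ (Hframe a b H))) HT HT) as Ett.
  pose proof (gform_const_deriv _ _ 0 k a b H
    (fun a b H => proj1 (proj2 (null_frame_gform _ _ _ _ _ _ (Hframe a b H)))) HW HW) as Eww.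
  pose proof (gform_const_deriv _ _ (-1) k a b H
    (fun a b H => proj2 (proj2 (null_frame_gform _ _ _ _ _ _ (Hframe a b H)))) HT HW) as Etw.
  pose proof (deriv_gmet_tZ k 1 a b H (or_intror eq_refl)) as Ez1.
  rewrite (dgmet_sym _ _ k 1 0), (gmet_sym _ _ 1 0) in Ez1.
  apply (null_frame_deriv _ _ _ _ _ _ _ H1 H2 H3 _ _ _
    (pd k (fun a b => tZ a b 0) a b) (pd k (fun a b => tZ a b 1) a b)); auto.
  - unfold gform in *. lra.
  - unfold gform in *. lra.
  - exact (deriv_gmet_tZ k 0 a b H (or_introl eq_refl)).
Qed.

Definition Zperp_Xdd (k j : nat) (a b : R) : R := mink n (norp n X Z a b) (pdv k (Xd X j) a b).

Lemma mink_Z_Xdd k j a b : mink n Z (pdv k (Xd X j) a b) =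
  tZ a b 0 * mink n (Xd X 0 a b) (pdv k (Xd X j) a b)
  + tZ a b 1 * mink n (Xd X 1 a b) (pdv k (Xd X j) a b) + Zperp_Xdd k j a b.
Proof. unfold Zperp_Xdd, norp. rewrite tanpE. mink_expand. ring. Qed.

Lemma Zperp_Xdd_tZ k a b : U a b -> tZ a b 0 * Zperp_Xdd k 0 a b + tZ a b 1 * Zperp_Xdd k 1 a b = 0.
Proof.
  intro H. destruct (frame_derivs k a b H) as [R _].
  rewrite !mink_Z_Xdd in R. unfold gform, dgmet in R. revert R. mink_canon. lra.
Qed.

Lemma Zperp_Xdd_sym a b : U a b -> Zperp_Xdd 1 0 a b = Zperp_Xdd 0 1 a b.
Proof. intro H. unfold Zperp_Xdd. rewrite (Xdd_sym U X HU HX a b H). reflexivity. Qed.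

(* <Z^perp, X_ij> is symmetric and annihilates T, hence of rank one. *)
Lemma Zperp_Xdd_rank1 a b : U a b -> exists c,
  Zperp_Xdd 0 0 a b = c * (tZ a b 1 * tZ a b 1) /\
  Zperp_Xdd 0 1 a b = - c * (tZ a b 0 * tZ a b 1) /\
  Zperp_Xdd 1 0 a b = - c * (tZ a b 0 * tZ a b 1) /\
  Zperp_Xdd 1 1 a b = c * (tZ a b 0 * tZ a b 0).
Proof.
  intro H. pose proof (Zperp_Xdd_tZ 0 a b H) as R0. pose proof (Zperp_Xdd_tZ 1 a b H) as R1.
  rewrite (Zperp_Xdd_sym a b H) in *.
  destruct (sym2_kernel_rank1 _ _ _ _ _ (tZ_norm2_neq0 a b H) R0 R1) as [c [E0 [E1 E2]]].
  exists c. repeat split; auto.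
Qed.

Lemma mink_IIc_Zperp i j a b : U a b -> mink n (IIc n X i j a b) (norp n X Z a b) = Zperp_Xdd i j a b.
Proof.
  intro H. unfold IIc, Zperp_Xdd. rewrite <- mink_norp_r by (apply gdet_neq0, H).
  apply mink_sym.
Qed.

Lemma Hvec_null_frame a b : U a b -> Hvec n X a b = vopp (II n X (tZ a b) (w a b) a b).
Proof.
  intro H. destruct (null_frame_ginv _ _ _ _ _ _ (Hframe a b H)) as [I00 [I01 [I10 I11]]].
  unfold Hvec, II. repeat (rewrite vsum2E; cbv beta).
  rewrite I00, I01, I10, I11, !(IIc_sym n U X HU HX a b H).
  apply vext; intro c. unfold vadd, vscale, vopp. field.
Qed.

Lemma norp_Hvec a b : U a b -> norp n X (Hvec n X a b) a b = Hvec n X a b.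
Proof.
  intro H. unfold Hvec. repeat (rewrite vsum2E; cbv beta).
  rewrite norp_vscale, !norp_vadd, !norp_vscale, !norp_IIc by (apply gdet_neq0, H).
  reflexivity.
Qed.

Lemma mink_Hvec_Zperp a b : U a b -> mink n (Hvec n X a b) (norp n X Z a b) = 0.
Proof.
  intro H. rewrite (Hvec_null_frame a b H). unfold II. repeat (rewrite vsum2E; cbv beta).
  mink_expand. rewrite !mink_IIc_Zperp by exact H.
  destruct (Zperp_Xdd_rank1 a b H) as [c [E0 [E1 [E2 E3]]]]. rewrite E0, E1, E2, E3. ring.
Qed.

Lemma mink_Hvec_nablaperp_Zperp u v : U u v ->
  mink n (Hvec n X u v) (Hvec n X u v)
  = - mink n (nablaperp n X (w u v) (Hvec n X) u v) (norp n X Z u v).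
Proof.
  intro H. pose proof (gdet_neq0 u v H) as Hd.
  assert (DK : forall k, mink n (pdv k (Hvec n X) u v) (norp n X Z u v)
      + mink n (Hvec n X u v) (pdv k (fun a b => norp n X Z a b) u v) = 0).
  { intro k. apply (is_pd_local_unique U k (fun a b => mink n (Hvec n X a b) (norp n X Z a b))
      (fun _ _ => 0) u v); auto using mink_Hvec_Zperp, is_pd_const.
    apply is_pd_mink; [apply (is_pdv_Hvec n U X HX k u v H Hd) |].
    exact (is_pdv_norp n U X HX (fun _ _ => Z) _ k u v H Hd (is_pdv_const k Z u v)). }
  assert (DZ : forall k, mink n (Hvec n X u v) (pdv k (fun a b => norp n X Z a b) u v)
    = - mink n (Hvec n X u v) (vadd (vscale (tZ u v 0) (IIc n X k 0 u v))
                                     (vscale (tZ u v 1) (IIc n X k 1 u v)))).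
  { intro k. rewrite <- (norp_Hvec u v H), mink_norp_l, (norp_Hvec u v H) by exact Hd.
    rewrite (norp_pdv_norp n U X HX (fun _ _ => Z) _ k u v H Hd (is_pdv_const k Z u v)), norp_0.
    mink_expand. ring. }
  unfold nablaperp. rewrite <- mink_norp_r by exact Hd. unfold Dv. rewrite vsum2E. cbv beta.
  mink_expand.
  assert (E0 := DK 0%nat). assert (E1 := DK 1%nat). rewrite DZ in E0, E1.
  replace (mink n (pdv 0 (Hvec n X) u v) (norp n X Z u v)) with
    (mink n (Hvec n X u v) (vadd (vscale (tZ u v 0) (IIc n X 0 0 u v))
                                  (vscale (tZ u v 1) (IIc n X 0 1 u v)))) by lra.
  replace (mink n (pdv 1 (Hvec n X) u v) (norp n X Z u v)) with
    (mink n (Hvec n X u v) (vadd (vscale (tZ u v 0) (IIc n X 1 0 u v))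
                                  (vscale (tZ u v 1) (IIc n X 1 1 u v)))) by lra.
  rewrite (Hvec_null_frame u v H). unfold II. repeat (rewrite vsum2E; cbv beta).
  rewrite !(IIc_sym n U X HU HX u v H). mink_expand. mink_canon. ring.
Qed.

Ltac sort_Xd a b H :=
  do 2 rewrite ?(Xddd_sym_r U X HU HX _ a b H), ?(Xddd_sym_l U X HU HX _ a b H),
    ?(Xdd_sym U X HU HX a b H).

Ltac curvature_atoms a b H :=
  first [ frame_jet_atoms a b H | apply (is_pdv_IIc n U X HX _ _ _ a b H (gdet_neq0 a b H)) ].

Lemma nablaperp_Hvec u v : U u v ->
  nablaperp n X (w u v) (Hvec n X) u v =
  vopp (nablaperp n X (ZTc n X Z u v) (fun a b => II n X (w a b) (w a b) a b) u v).
Proof.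
  intro H. pose proof (gdet_neq0 u v H) as Hd.
  unfold nablaperp, Dv, ZTc. rewrite !vsum2E. cbv beta.
  erewrite (pdv_eq 0 (Hvec n X) u v), (pdv_eq 1 (Hvec n X) u v),
    (pdv_eq 0 (fun a b => II n X (w a b) (w a b) a b) u v),
    (pdv_eq 1 (fun a b => II n X (w a b) (w a b) a b) u v)
    by (unfold Hvec, II; pd_rules ltac:(curvature_atoms u v H)).
  cbv beta.
  repeat first [ rewrite norp_vadd | rewrite norp_vsub | rewrite norp_vscale
   | rewrite norp_0 | rewrite (norp_pdv_IIc n U X HX _ _ _ _ _ H Hd)
   | rewrite (norp_IIc n X _ _ _ _ Hd) ].
  sort_Xd u v H. rewrite !(IIc_sym n U X HU HX u v H).
  apply vext; intro c. unfold vadd, vsub, vscale, vopp.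
  rewrite !(pd_ginv n U X HX _ _ _ u v H Hd).
  destruct (frame_derivs 0 u v H) as [_ [W00 W01]].
  destruct (frame_derivs 1 u v H) as [_ [W10 W11]].
  rewrite W00, W01, W10, W11.
  rewrite !(tcoefE n X (pdv 0 (Xd X 0) u v)), !(tcoefE n X (pdv 0 (Xd X 1) u v)),
    !(tcoefE n X (pdv 1 (Xd X 1) u v)), !mink_Z_Xdd.
  destruct (Zperp_Xdd_rank1 u v H) as [cc [N00 [N01 [N10 N11]]]].
  rewrite ?N00, ?N01, ?N10, ?N11.
  unfold dgmet, gform, sum2. cbv beta.
  sort_Xd u v H.
  (* With g^{-1} in null-frame form no denominator is left: a polynomial identity. *)
  destruct (null_frame_ginv _ _ _ _ _ _ (Hframe u v H)) as [I00 [I01 [I10 I11]]].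
  rewrite ?I00, ?I01, ?I10, ?I11.
  mink_canon. field.
Qed.

End CanonicalNullDirection.

(** * Truncation to the components 0..n *)

(* Only the components 0..n of X are assumed smooth, whereas componentwise derivatives
   of vectors need all of them; zeroing the other components changes none of the
   quantities in the theorem. *)
Definition Xcut (n : nat) (X : R -> R -> vec) : R -> R -> vec :=
  fun a b c => if Nat.leb c n then X a b c else 0.

Lemma smooth_on_0 U : smooth_on U (fun _ _ => 0).
Proof.
  assert (E : forall w, iter_pd w (fun _ _ => 0) = (fun _ _ => 0)).
  { induction w as [|i w IH]; simpl; [reflexivity | rewrite IH].
    do 2 (apply functional_extensionality; intro). apply pd_eq, is_pd_const. }
  intro w. rewrite E. split.
  - intros i u v _. apply has_pdE. exists 0. apply is_pd_const.
  - intros u v _ eps Heps. exists 1. split; [lra|]. intros. rewrite Rminus_0_r, Rabs_R0. lra.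
Qed.

Lemma smooth_on_Xcut n U X : (forall c, (c <= n)%nat -> smooth_on U (fun a b => X a b c)) ->
  forall c, smooth_on U (fun a b => Xcut n X a b c).
Proof.
  intros H c. unfold Xcut. destruct (Nat.leb c n) eqn:E.
  - apply H, Nat.leb_le, E.
  - apply smooth_on_0.
Qed.

Section Truncation.
Variable n : nat.
Variable X : R -> R -> vec.
Local Notation X' := (Xcut n X).

Definition fields_eq (F G : R -> R -> vec) : Prop :=
  forall c, (c <= n)%nat -> (fun a b => F a b c) = (fun a b => G a b c).

Lemma fields_eq_veq F G : fields_eq F G -> forall a b, veq n (F a b) (G a b).
Proof. intros H a b c Hc. exact (equal_f (equal_f (H c Hc) a) b). Qed.

Lemma fields_eq_pdv i F G : fields_eq F G -> fields_eq (pdv i F) (pdv i G).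
Proof. intros H c Hc. unfold pdv. rewrite (H c Hc). reflexivity. Qed.

Lemma fields_eq_Xd i : fields_eq (Xd X' i) (Xd X i).
Proof.
  apply fields_eq_pdv. intros c Hc. unfold Xcut. apply Nat.leb_le in Hc. rewrite Hc. reflexivity.
Qed.

Lemma mink_veq x x' y y' : veq n x x' -> veq n y y' -> mink n x y = mink n x' y'.
Proof. intros H1 H2. unfold mink. apply sum_eq. intros k Hk. rewrite H1, H2 by lia. reflexivity. Qed.

Lemma gmet_Xcut : gmet n X' = gmet n X.
Proof.
  do 4 (apply functional_extensionality; intro).
  unfold gmet. apply mink_veq; apply fields_eq_veq, fields_eq_Xd.
Qed.

Lemma gdet_Xcut : gdet n X' = gdet n X.
Proof. unfold gdet. rewrite gmet_Xcut. reflexivity. Qed.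

Lemma ginv_Xcut : ginv n X' = ginv n X.
Proof. unfold ginv. rewrite gdet_Xcut, gmet_Xcut. reflexivity. Qed.

Lemma Kgauss_Xcut u v : Kgauss n X' u v = Kgauss n X u v.
Proof. unfold Kgauss, Rcoef, Gam. rewrite ginv_Xcut, gmet_Xcut, gdet_Xcut. reflexivity. Qed.

Lemma tcoef_Xcut Y Y' a b : veq n Y Y' -> tcoef n X' Y a b = tcoef n X Y' a b.
Proof.
  intro H. apply functional_extensionality; intro i. unfold tcoef, sum2. rewrite ginv_Xcut.
  rewrite (mink_veq Y Y' (Xd X' 0 a b) (Xd X 0 a b)), (mink_veq Y Y' (Xd X' 1 a b) (Xd X 1 a b));
    auto using fields_eq_veq, fields_eq_Xd.
Qed.

Lemma tvec_Xcut p a b : veq n (tvec X' p a b) (tvec X p a b).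
Proof.
  intros c Hc. unfold tvec, vsum2, vscale.
  rewrite !(fields_eq_veq _ _ (fields_eq_Xd _) a b c Hc). reflexivity.
Qed.

Lemma norp_Xcut Y Y' a b : veq n Y Y' -> veq n (norp n X' Y a b) (norp n X Y' a b).
Proof.
  intros H c Hc. unfold norp, tanp, vsub. rewrite (tcoef_Xcut Y Y' a b H).
  rewrite (tvec_Xcut _ a b c Hc), (H c Hc). reflexivity.
Qed.

Lemma IIc_Xcut i j a b : veq n (IIc n X' i j a b) (IIc n X i j a b).
Proof. apply norp_Xcut, fields_eq_veq, fields_eq_pdv, fields_eq_Xd. Qed.

Lemma Hvec_Xcut : fields_eq (Hvec n X') (Hvec n X).
Proof.
  intros c Hc. do 2 (apply functional_extensionality; intro).
  unfold Hvec, vscale, vsum2. rewrite ginv_Xcut, !(IIc_Xcut _ _ _ _ c Hc). reflexivity.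
Qed.

Lemma II_Xcut p q a b : veq n (II n X' p q a b) (II n X p q a b).
Proof. intros c Hc. unfold II, vscale, vsum2. rewrite !(IIc_Xcut _ _ _ _ c Hc). reflexivity. Qed.

Lemma II_field_Xcut (p q : R -> R -> nat -> R) :
  fields_eq (fun a b => II n X' (p a b) (q a b) a b) (fun a b => II n X (p a b) (q a b) a b).
Proof. intros c Hc. do 2 (apply functional_extensionality; intro). apply II_Xcut, Hc. Qed.

Lemma nablaperp_Xcut (p : nat -> R) F G u v : fields_eq F G ->
  veq n (nablaperp n X' p F u v) (nablaperp n X p G u v).
Proof.
  intro H. apply norp_Xcut. intros c Hc. unfold Dv, vsum2, vscale.
  rewrite !(fields_eq_veq _ _ (fields_eq_pdv _ F G H) u v c Hc). reflexivity.
Qed.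

Lemma null_frame_Xcut t w a b : null_frame n X t w a b -> null_frame n X' t w a b.
Proof.
  unfold null_frame. rewrite !(mink_veq _ _ _ _ (tvec_Xcut _ a b) (tvec_Xcut _ a b)). auto.
Qed.

End Truncation.

Theorem mainTheorem6 (n : nat) (U : R -> R -> Prop) (X : R -> R -> vec)
  (Z : vec) (w : R -> R -> nat -> R) :
  open2 U ->
  (forall k, (k <= n)%nat -> smooth_on U (fun u v => X u v k)) ->
  (* M is timelike: the induced metric has signature (1,1) *)
  (forall u v, U u v -> gdet n X u v < 0) ->
  (* Z is a constant unit spacelike vector *)
  mink n Z Z = 1 ->
  (* canonical null direction: Z^T is lightlike everywhere on M *)
  (forall u v, U u v ->
     vnonzero n (tanp n X Z u v) /\ mink n (tanp n X Z u v) (tanp n X Z u v) = 0) ->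
  (* W is the lightlike tangent field with <Z^T, W> = -1 *)
  (forall u v, U u v ->
     vnonzero n (tvec X (w u v) u v) /\
     mink n (tvec X (w u v) u v) (tvec X (w u v) u v) = 0 /\
     mink n (tanp n X Z u v) (tvec X (w u v) u v) = -1) ->
  forall u v, U u v ->
    veq n (nablaperp n X (w u v) (Hvec n X) u v)
          (vopp (nablaperp n X (ZTc n X Z u v)
                   (fun a b => II n X (w a b) (w a b) a b) u v)) /\
    mink n (Hvec n X u v) (Hvec n X u v)
      = - mink n (nablaperp n X (w u v) (Hvec n X) u v) (norp n X Z u v) /\
    Kgauss n X u v
      = mink n (Hvec n X u v) (Hvec n X u v)
        - mink n (II n X (w u v) (w u v) u v)
                 (II n X (ZTc n X Z u v) (ZTc n X Z u v) u v).
Proof.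
  intros HU HXs _ _ Hnull HW u v Huv.
  pose proof (smooth_on_Xcut n U X HXs) as HX'.
  assert (HT : forall a b, tcoef n (Xcut n X) Z a b = tcoef n X Z a b)
    by (intros; apply tcoef_Xcut; intros c _; reflexivity).
  assert (Hframe : forall a b, U a b -> null_frame n (Xcut n X) (tcoef n (Xcut n X) Z a b) (w a b) a b).
  { intros a b H. rewrite HT. apply null_frame_Xcut.
    destruct (Hnull a b H) as [_ Htt], (HW a b H) as [_ [Hww Htw]]. split; auto. }
  pose proof (fields_eq_veq n _ _ (Hvec_Xcut n X) u v) as VH.
  split; [|split].
  - intros c Hc.
    rewrite <- (nablaperp_Xcut n X _ _ _ u v (Hvec_Xcut n X) c Hc),
      (nablaperp_Hvec n U _ HU HX' Z w Hframe u v Huv).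
    unfold vopp, ZTc. rewrite HT, (nablaperp_Xcut n X _ _ _ u v (II_field_Xcut n X _ _) c Hc).
    reflexivity.
  - rewrite <- (mink_veq n _ _ _ _ VH VH),
      <- (mink_veq n _ _ _ _ (nablaperp_Xcut n X _ _ _ u v (Hvec_Xcut n X))
            (norp_Xcut n X Z Z u v (fun _ _ => eq_refl))).
    exact (mink_Hvec_nablaperp_Zperp n U _ HU HX' Z w Hframe u v Huv).
  - rewrite <- Kgauss_Xcut, (Kgauss_null_frame n U _ HU HX' _ _ u v Huv (Hframe u v Huv)).
    unfold ZTc. rewrite HT, (mink_veq n _ _ _ _ VH VH).
    rewrite (mink_veq n _ _ _ _ (II_Xcut n X _ _ u v) (II_Xcut n X _ _ u v)). reflexivity.
Qed.
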